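(* Let $\alpha\in(0,1)$, $c>0$, $c'>0$, and let $K_\alpha$ be a class of finite simple undirected graphs closed under taking subgraphs such that every $H\in K_\alpha$ with $h$ vertices has a balanced separator of cardinality at most $c\,h^\alpha$. Then there exist constants $C$ and $n_0$ depending only on $\alpha,c,c'$ such that the following holds. Let $G\in K_\alpha$ be connected with $n\ge n_0$ vertices, such that every balanced separator of $G$ has at least $c' n^\alpha$ vertices. Let $\pi_{nd}$ be any nested dissection order of $G$ and $\pi$ any vertex order of $G$. Then each of the following four quantities for $\pi_{nd}$ is at most $C$ times the same quantity for $\pi$: (1) $\max_{v}$ of the number of vertices of $\mathrm{SS}(v)$; (2) $\max_v$ of the number of arcs of $\mathrm{SS}(v)$; (3) the average over all $v\in V$ of the number of vertices of $\mathrm{SS}(v)$; (4) the average over all $v\in V$ of the number of arcs of $\mathrm{SS}(v)$ (search spaces taken in $G_{\pi_{nd}}^\wedge$, respectively $G_\pi^\wedge$).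
   Context: Let $G=(V,E)$ be a finite simple undirected graph with $n=|V|$ vertices. A vertex order is a bijection $\pi:\{1,\dots,n\}\to V$; the rank of $v$ is $\pi^{-1}(v)$. Contracting a vertex $v$ in a graph means deleting $v$ and its incident edges and adding an edge between every pair of former neighbors of $v$ that are not already adjacent. The core graph $G_{\pi,i}$ is obtained from $G$ by contracting $\pi(1),\dots,\pi(i-1)$ in this order. $G_\pi^*$ is the graph on $V$ whose edge set is the union of the edge sets of all $G_{\pi,i}$, $i=1,\dots,n$ (i.e. $G$ together with all edges inserted during the contractions). $G_\pi^\wedge$ is the directed graph obtained from $G_\pi^*$ by orienting every edge from its endpoint of lower rank to its endpoint of higher rank. The search space $\mathrm{SS}(v)$ is the subgraph of $G_\pi^\wedge$ induced by the set of vertices reachable from $v$ in $G_\pi^\wedge$ (including $v$). A balanced separator of a graph with vertex set $V$, $|V|=n$, is a set $S\subseteq V$ such that $V\setminus S$ can be partitioned into sets $A,B$ (possibly empty) with no edge between $A$ and $B$ and $|A|,|B|\le 2n/3$. A nested dissection order of $G$ is defined recursively: if $G$ is empty it is the empty order; otherwise choose a balanced separator $S$ of $G$ of minimum cardinality with corresponding parts $A,B$, give the vertices of $S$ the ranks $n-|S|+1,\dots,n$ in arbitrary order, give the vertices of $A$ the ranks $1,\dots,|A|$ according to a nested dissection order of $G[A]$, and the vertices of $B$ the ranks $|A|+1,\dots,|A|+|B|$ according to a nested dissection order of $G[B]$. *)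

From Stdlib Require Import Reals.
From mathcomp Require Import all_boot.
Set Implicit Arguments. Unset Strict Implicit. Unset Printing Implicit Defensive.

Definition simple_graph (n : nat) (e : rel 'I_n) : Prop :=
  symmetric e /\ irreflexive e.

Definition connected_graph (n : nat) (e : rel 'I_n) : Prop :=
  forall x y, connect e x y.

(* x^a for x >= 0 real (with 0^a = 0). *)
Definition rpow (x a : R) : R :=
  if Rle_dec x R0 then R0 else Rpower x a.

Definition bal_sep_in (n : nat) (e : rel 'I_n) (U S A B : {set 'I_n}) : Prop :=
  [/\ S \subset U, A :|: B = U :\: S, [disjoint A & B],
      (forall x y, x \in A -> y \in B -> ~~ e x y) &
      (3 * #|A| <= 2 * #|U|) && (3 * #|B| <= 2 * #|U|)].

Definition balanced_sep_in (n : nat) (e : rel 'I_n) (U S : {set 'I_n}) : Prop :=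
  exists A B, bal_sep_in e U S A B.

Definition balanced_sep (n : nat) (e : rel 'I_n) (S : {set 'I_n}) : Prop :=
  balanced_sep_in e setT S.

(* A vertex order is represented as the sequence pi(1), ..., pi(n) of all vertices,
   each exactly once; the rank of v is (index v s).+1. *)
Definition vertex_order (n : nat) (s : seq 'I_n) : Prop :=
  perm_eq s (enum 'I_n).

Inductive nd_order (n : nat) (e : rel 'I_n) : {set 'I_n} -> seq 'I_n -> Prop :=
| nd_empty : nd_order e set0 [::]
| nd_step (U S A B : {set 'I_n}) (sA sB sS : seq 'I_n) :
    U != set0 ->
    bal_sep_in e U S A B ->
    (forall S', balanced_sep_in e U S' -> #|S| <= #|S'|) ->
    nd_order e A sA ->
    nd_order e B sB ->
    perm_eq sS (enum S) ->
    nd_order e U (sA ++ sB ++ sS).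

Definition nested_dissection_order (n : nat) (e : rel 'I_n) (s : seq 'I_n) : Prop :=
  nd_order e setT s.

Definition contract (n : nat) (E : rel 'I_n) (v : 'I_n) : rel 'I_n :=
  fun x y => [&& x != v, y != v & E x y || [&& E x v, E y v & x != y]].

(* Edge relation of G*_pi: union of edges of all core graphs obtained by
   contracting the vertices of s in order. *)
Fixpoint star_graph (n : nat) (E : rel 'I_n) (s : seq 'I_n) : rel 'I_n :=
  fun x y => E x y || (if s is v :: s' then star_graph (contract E v) s' x y else false).

Definition up_graph (n : nat) (e : rel 'I_n) (s : seq 'I_n) : rel 'I_n :=
  fun x y => star_graph e s x y && (index x s < index y s).

Definition ss_vertices (n : nat) (e : rel 'I_n) (s : seq 'I_n) (v : 'I_n) : {set 'I_n} :=
  [set y | connect (up_graph e s) v y].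

Definition ss_arcs (n : nat) (e : rel 'I_n) (s : seq 'I_n) (v : 'I_n) : {set 'I_n * 'I_n} :=
  [set p | [&& p.1 \in ss_vertices e s v, p.2 \in ss_vertices e s v & up_graph e s p.1 p.2]].

Definition max_ss_vertices (n : nat) (e : rel 'I_n) (s : seq 'I_n) : nat :=
  \max_(v : 'I_n) #|ss_vertices e s v|.
Definition max_ss_arcs (n : nat) (e : rel 'I_n) (s : seq 'I_n) : nat :=
  \max_(v : 'I_n) #|ss_arcs e s v|.
Definition avg_ss_vertices (n : nat) (e : rel 'I_n) (s : seq 'I_n) : R :=
  Rdiv (INR (\sum_(v : 'I_n) #|ss_vertices e s v|)) (INR n).
Definition avg_ss_arcs (n : nat) (e : rel 'I_n) (s : seq 'I_n) : R :=
  Rdiv (INR (\sum_(v : 'I_n) #|ss_arcs e s v|)) (INR n).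

Definition graph_class := forall n : nat, rel 'I_n -> Prop.

(* Closed under taking subgraphs (up to isomorphism): if H embeds injectively
   into G (edges to edges) and G is in K, then H is in K. *)
Definition subgraph_closed (K : graph_class) : Prop :=
  forall (n m : nat) (e : rel 'I_n) (e' : rel 'I_m) (f : 'I_m -> 'I_n),
    simple_graph e -> simple_graph e' -> injective f ->
    (forall x y, e' x y -> e (f x) (f y)) ->
    K n e -> K m e'.

Definition small_separators (K : graph_class) (alpha c : R) : Prop :=
  forall (h : nat) (e : rel 'I_h), simple_graph e -> K h e ->
    exists S, balanced_sep e S /\ Rle (INR #|S|) (Rmult c (rpow (INR h) alpha)).

(* Fill-in lemma: [x y] is an edge of G*_pi iff [x] and [y] are joined
   by a walk of G whose interior vertices rank below both.  Consequently [w]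
   lies in SS(v) whenever [v] is joined to a higher-ranked [w] by a walk
   through vertices ranked below [w].

   In a nested dissection order, the neighbours of a dissected
   set [U] outside [U] rank above [U] and its separator [S] ranks above its
   parts; so a search space from a part [A] meets [U] only in [A] and [S].  A
   minimum separator of G[U] has at most c |U|^alpha vertices (the class is
   subgraph-closed) and parts shrink by 2/3, so induction on the dissection
   gives |SS(v)| <= c / (1 - (2/3)^alpha) * n^alpha.

   For any order, let [r] be least such that a component [Q] of
   the subgraph induced by the [r] lowest-ranked vertices has more than n/3
   vertices.  The vertex of rank r-1 plus the outer neighbourhood of [Q] is a
   balanced separator [M] (hence |M| >= c' n^alpha), a clique of G*_pi, and
   contained in SS(v) for every v in Q.  So more than n/3 search spaces have
   at least |M| vertices and |M|(|M|-1)/2 arcs. *)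

From Stdlib Require Import Reals Lra.
From mathcomp Require Import all_boot zify.
Set Implicit Arguments. Unset Strict Implicit. Unset Printing Implicit Defensive.

Inductive walk (T : Type) (e : T -> T -> bool) (D : T -> bool) : T -> T -> Prop :=
| walk_edge x y : e x y -> walk e D x y
| walk_cons x z y : e x z -> D z -> walk e D z y -> walk e D x y.

Section Walks.
Variables (T : Type) (e : T -> T -> bool).

Lemma walk_mono (D D' : T -> bool) x y :
  (forall z, D z -> D' z) -> walk e D x y -> walk e D' x y.
Proof. by move=> DD'; elim=> [a b|a z b] *; [apply: walk_edge | apply: walk_cons; eauto]. Qed.

Lemma walk_cat (D : T -> bool) x z y :
  walk e D x z -> D z -> walk e D z y -> walk e D x y.
Proof.
elim=> {x z} [a b eab|a c b eac Dc _ IH] Db Wby; first exact: walk_cons Wby.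
exact: walk_cons eac Dc (IH Db Wby).
Qed.

Lemma walk_rcons (D : T -> bool) x z y :
  walk e D x z -> D z -> e z y -> walk e D x y.
Proof. by move=> Wxz Dz ezy; apply: (walk_cat Wxz Dz); apply: walk_edge. Qed.

Lemma walk_sym (D : T -> bool) x y : symmetric e -> walk e D x y -> walk e D y x.
Proof.
move=> se; elim=> [a b eab|a c b eac Dc _ IH]; first by apply: walk_edge; rewrite se.
by apply: walk_rcons IH Dc _; rewrite se.
Qed.

Lemma walk_tail (D D' : T -> bool) v x y :
  (forall z, D' z -> z = v \/ D z) ->
  walk e D' x y -> walk e D x y \/ walk e D v y.
Proof.
move=> DD'; elim=> [a b eab|a z b eaz D'z _ IH]; first by left; apply: walk_edge.
case: IH => [Wzb|]; last by right.
by case: (DD' _ D'z) => [<-|Dz]; [right | left; apply: walk_cons eaz Dz Wzb].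
Qed.

Lemma walk_split (D D' : T -> bool) v x y :
  (forall z, D' z -> z = v \/ D z) ->
  walk e D' x y -> walk e D x y \/ (walk e D x v /\ walk e D v y).
Proof.
move=> DD'; elim=> [a b eab|a z b eaz D'z Wzb IH]; first by left; apply: walk_edge.
case: (DD' _ D'z) => [Ez|Dz].
  right; split; first by apply: walk_edge; rewrite -Ez.
  by case: (walk_tail DD' Wzb) => W; [rewrite -Ez|].
case: IH => [W|[W1 W2]]; first by left; apply: walk_cons eaz Dz W.
by right; split=> //; apply: walk_cons eaz Dz W1.
Qed.

End Walks.

Lemma walk_avoid_end (T : eqType) (e : rel T) (D : pred T) x y :
  walk e D x y -> walk e (fun z => D z && (z != y)) x y.
Proof.
elim=> [a b eab|a c b eac Dc _ IH]; first exact: walk_edge.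
case: (eqVneq c b) => [Ecb|ncb]; first by apply: walk_edge; rewrite -Ecb.
by apply: walk_cons eac _ IH; rewrite Dc.
Qed.

Lemma connect_walk (T : finType) (R e : rel T) (D : pred T) v w :
  (forall a b, R a b -> e a b && D b) -> connect R v w -> v != w -> walk e D v w.
Proof.
move=> RD /connectP [p pth ->]; elim: p v pth => [|z p IH] v /=; first by rewrite eqxx.
case/andP=> /RD /andP[evz Dz] pth _.
case: p IH pth => [|z' p] IH pth /=; first exact: walk_edge.
case: (eqVneq z (last z' p)) => [Ez|nz]; first by apply: walk_edge; rewrite -Ez.
exact: walk_cons evz Dz (IH _ _ _).
Qed.

Lemma connect_inv (T : finType) (R R' : rel T) (X : pred T) x y :
  X x -> (forall u w, X u -> R u w -> X w /\ R' u w) ->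
  connect R x y -> connect R' x y /\ X y.
Proof.
move=> Xx H /connectP [p pth ->].
elim: p x Xx pth => [|z p IH] x Xx /=; first by rewrite connect0.
case/andP=> Rxz pth; have [Xz R'xz] := H _ _ Xx Rxz.
have [c Xl] := IH _ Xz pth; split=> //.
exact: connect_trans (connect1 R'xz) c.
Qed.

Section FillIn.
Variables (n : nat) (e : rel 'I_n).
Hypothesis sg : simple_graph e.

Definition core_graph (E : rel 'I_n) (P : seq 'I_n) : rel 'I_n := foldl (@contract n) E P.

Lemma core_graph_rcons E P v : core_graph E (rcons P v) = contract (core_graph E P) v.
Proof. by rewrite /core_graph foldl_rcons. Qed.

Lemma core_graphP P : uniq P -> forall x y,
  core_graph e P x y <-> [/\ x \notin P, y \notin P, x != y & walk e (mem P) x y].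
Proof.
have [se ie] := sg; elim/last_ind: P => [|P v IH] uP x y.
  rewrite /core_graph /=; split; last by case=> _ _ _; case.
  move=> exy; split=> //; last exact: walk_edge.
  by apply/eqP=> Exy; move: exy; rewrite Exy ie.
have [uP' vP] : uniq P /\ v \notin P by move: uP; rewrite rcons_uniq => /andP[].
have Pv : forall z, z \in rcons P v -> z = v \/ z \in P.
  by move=> z; rewrite mem_rcons in_cons => /orP[/eqP|]; auto.
have PPv : forall z, z \in P -> z \in rcons P v.
  by move=> z; rewrite mem_rcons in_cons orbC => ->.
have vPv : v \in rcons P v by rewrite mem_rcons mem_head.
rewrite core_graph_rcons /contract !mem_rcons !in_cons !negb_or.
split.
  case/and3P=> xv yv /orP[/(IH uP') [xP yP nxy W]|
    /and3P[/(IH uP') [xP _ _ W1] /(IH uP') [yP _ _ W2] nxy]];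
    rewrite xv xP yv yP; split=> //; first exact: walk_mono PPv W.
  apply: (walk_cat (walk_mono PPv W1) vPv).
  exact: walk_mono PPv (walk_sym se W2).
move=> -[/andP[xv xP] /andP[yv yP] nxy W]; rewrite xv yv /=.
case: (walk_split Pv W) => [W'|[W1 W2]]; first by apply/orP; left; apply/(IH uP').
apply/orP; right; rewrite nxy andbT; apply/andP; split; apply/(IH uP'); first by split.
by split=> //; apply: walk_sym.
Qed.

Lemma star_graph_core E s x y :
  star_graph E s x y <-> exists i, core_graph E (take i s) x y.
Proof.
split.
  elim: s E => [|v s IH] E /=; first by rewrite orbF => H; exists 0.
  by case/orP=> [H|/IH [i H]]; [exists 0 | exists i.+1].
case=> i; elim: s E i => [|v s IH] E [|i] /=; rewrite ?orbF // => H; first by rewrite H.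
by rewrite (IH _ _ H) orbT.
Qed.

Variable s : seq 'I_n.
Hypothesis vo : vertex_order s.

Lemma vo_uniq : uniq s.
Proof. by rewrite (perm_uniq vo) enum_uniq. Qed.

Lemma vo_mem z : z \in s.
Proof. by rewrite (perm_mem vo) mem_enum. Qed.

Lemma rank_inj : injective (fun x => index x s).
Proof. by move=> x y; apply: index_inj (vo_mem x) (vo_mem y). Qed.

Lemma star_graphP x y :
  star_graph e s x y <->
  x != y /\ walk e (fun z => index z s < minn (index x s) (index y s)) x y.
Proof.
have us := vo_uniq; split.
  move=> /star_graph_core [i] /(core_graphP (take_uniq i us)) [xP yP nxy W].
  split=> //; apply: walk_mono W => z zP.
  have := index_ltn zP; move: xP yP; rewrite !in_take ?vo_mem // -!leqNgt => hx hy hz.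
  by rewrite leq_min (leq_trans hz hx) (leq_trans hz hy).
move=> [nxy W]; apply/star_graph_core; exists (minn (index x s) (index y s)).
apply/(core_graphP (take_uniq _ us)); split=> //.
- by rewrite in_take ?vo_mem // ltnNge geq_minl.
- by rewrite in_take ?vo_mem // ltnNge geq_minr.
- by apply: walk_mono W => z hz; rewrite inE in_take ?vo_mem.
Qed.

Lemma up_graph_walk x y :
  index x s < index y s -> walk e (fun z => index z s < index x s) x y ->
  connect (up_graph e s) x y.
Proof.
move=> lxy W; apply: connect1; rewrite /up_graph lxy andbT.
apply/star_graphP; rewrite (minn_idPl (ltnW lxy)); split=> //.
by apply/eqP=> Exy; move: lxy; rewrite Exy ltnn.
Qed.

Lemma search_space_reach v w :
  index v s < index w s -> walk e (fun z => index z s < index w s) v w ->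
  connect (up_graph e s) v w.
Proof.
move=> lvw W.
(* Invariant: [m] is a reached vertex below [w], and the current vertex [a] of
   the walk is [m] or lies above [m] and is joined to it below rank [m]. *)
suff H : forall a b, walk e (fun z => index z s < index w s) a b -> b = w -> forall m,
  connect (up_graph e s) v m -> index m s < index w s ->
  (m = a \/ (index a s < index m s /\ walk e (fun z => index z s < index m s) m a)) ->
  connect (up_graph e s) v w.
  by apply: (H v w W erefl v) => //; left.
move=> a b'; elim=> {a b'} [a b eab|a z b eaz Dz Wzb IH] Eb m cvm lmw st; subst b.
  apply: (connect_trans cvm); apply: up_graph_walk => //.
  case: st => [->|[lam Wma]]; first exact: walk_edge.
  exact: walk_rcons Wma lam eab.
have Wmz : walk e (fun z => index z s < index m s) m z.
  case: st => [->|[lam Wma]]; first exact: walk_edge.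
  exact: walk_rcons Wma lam eaz.
case: (ltngtP (index z s) (index m s)) => [lzm|lmz|/rank_inj Ezm].
- by apply: (IH erefl m) => //; right.
- by apply: (IH erefl z (connect_trans cvm (up_graph_walk lmz Wmz))) => //; left.
- by apply: (IH erefl m) => //; left.
Qed.

End FillIn.

Section Components.
Variables (T : finType) (e : rel T).
Hypothesis se : symmetric e.

Definition induced (W : {set T}) : rel T := fun u w => [&& e u w, u \in W & w \in W].

Definition component (W : {set T}) (y : T) : {set T} := [set z | connect (induced W) y z].

Definition comp_closed (W A : {set T}) : Prop :=
  forall u w, u \in A -> w \in W :\: A -> ~~ e u w.

Lemma induced_sym (W : {set T}) : symmetric (induced W).
Proof. by move=> x y; rewrite /induced se; case: (x \in W); case: (y \in W); rewrite ?andbF. Qed.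

Lemma component_sub (W : {set T}) y : y \in W -> component W y \subset W.
Proof.
move=> yW; apply/subsetP=> z; rewrite inE => c.
have [] // := @connect_inv _ (induced W) (induced W) (fun z => z \in W) y z yW _ c.
by move=> u w _ E; move/and3P: (E) => [_ _ ->].
Qed.

Lemma add_component (W A : {set T}) y : A \subset W -> comp_closed W A -> y \in W :\: A ->
  let C := component W y in
  [/\ A :|: C \subset W, comp_closed W (A :|: C), #|A :|: C| = #|A| + #|C|
    & #|W :\: (A :|: C)| < #|W :\: A|].
Proof.
move=> AW Acl /setDP [yW yA] C.
have CW : C \subset W := component_sub yW.
have Ccl : forall u w, u \in C -> w \in W -> e u w -> w \in C.
  move=> u w uC wW euw; have uW := subsetP CW u uC; move: uC; rewrite !inE => c.
  by apply: connect_trans c (connect1 _); rewrite /induced euw uW wW.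
have CA : [disjoint C & A].
  rewrite -setI_eq0; apply/eqP/setP=> z; rewrite !inE; apply/negbTE/negP=> /andP[c zA].
  have HA : forall u w, u \in A -> induced W u w -> w \in A /\ induced W u w.
    move=> u w uA E; split=> //; move/and3P: E => [euw _ wW].
    by apply/negPn/negP=> wA; move: (Acl u w uA); rewrite inE wA wW euw => /(_ isT).
  rewrite (sym_connect_sym (induced_sym W)) in c.
  by have [_ yA'] := connect_inv (X := fun z => z \in A) zA HA c; rewrite yA' in yA.
have yC : y \in C by rewrite inE connect0.
split.
- by rewrite subUset AW CW.
- move=> u w; rewrite in_setU in_setD in_setU negb_or => /orP[uA|uC] /andP[/andP[wA wC] wW].
    by apply: Acl uA _; rewrite in_setD wA wW.
  by apply/negP=> euw; move: wC; rewrite (Ccl u w uC wW euw).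
- by rewrite cardsU setIC (disjoint_setI0 CA) cards0 subn0 addnC.
- apply: proper_card; rewrite properE; apply/andP; split.
    by apply/subsetP=> z; rewrite !inE negb_or => /andP[/andP[-> _] ->].
  by apply/subsetPn; exists y; rewrite !in_setD ?in_setU ?yC ?orbT ?yA ?yW.
Qed.

Lemma group_components (W : {set T}) (k t0 : nat) : 0 < t0 ->
  (forall y, y \in W -> #|component W y| <= k) ->
  exists A : {set T}, [/\ A \subset W, comp_closed W A,
     #|A| < t0 + k & t0 <= #|A| \/ W \subset A].
Proof.
move=> t0p Hk.
suff H : forall d (A : {set T}), #|W :\: A| <= d -> A \subset W ->
  comp_closed W A -> #|A| < t0 + k ->
  exists A : {set T}, [/\ A \subset W, comp_closed W A,
     #|A| < t0 + k & t0 <= #|A| \/ W \subset A].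
  apply: (H _ set0 (leqnn _)); rewrite ?sub0set ?cards0 //; last by lia.
  by move=> u w; rewrite inE.
elim=> [|d IH] A sz AW Acl Ak.
  exists A; split=> //; right.
  by move: sz; rewrite leqn0 cards_eq0 setD_eq0.
case: (leqP t0 #|A|) => [le|ltA]; first by exists A; split=> //; left.
case: (set_0Vmem (W :\: A)) => [E0|[y yWA]].
  by exists A; split=> //; right; rewrite -setD_eq0 E0.
have [AW' Acl' cardAC ltd] := add_component AW Acl yWA.
apply: IH AW' Acl' _; first by rewrite -ltnS (leq_trans ltd).
have := Hk y (subsetP (subsetDl W A) y yWA); rewrite cardAC; lia.
Qed.

End Components.

(* A set [M] is a balanced separator as soon as every component of [G - M]
   has at most [n/3] vertices: group the components into two halves. *)
Lemma balanced_of_small_components n (e : rel 'I_n) (M : {set 'I_n}) : symmetric e ->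
  (forall y, y \in ~: M -> 3 * #|component e (~: M) y| <= n) -> balanced_sep e M.
Proof.
move=> se small.
have [|A [AW Acl Acard Aalt]] := @group_components _ e se (~: M) (n %/ 3) (n %/ 3).+1 isT.
  by move=> y /small; lia.
set W := ~: M in AW Acl Aalt *.
have cW : #|W| <= n by move: (max_card (mem W)); rewrite card_ord.
have cWA : #|W :\: A| = #|W| - #|A| by rewrite cardsD (setIidPr AW).
exists A, (W :\: A); split.
- exact: subsetT.
- rewrite setTD; apply/setP=> z; rewrite in_setU in_setD.
  by case zA: (z \in A); rewrite /= ?andbT // (subsetP AW z zA).
- by rewrite -setI_eq0 setDE setICA setICr !setI0.
- exact: Acl.
- rewrite cardsT card_ord; apply/andP; split; first by move: Acard; move: #|A| => a; lia.
  case: Aalt => [le|sWA]; first by rewrite cWA; move: le cW; move: #|A| #|W| => a w; lia.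
  by move: sWA; rewrite -setD_eq0 => /eqP ->; rewrite cards0.
Qed.

Section LowerBound.
Variables (n : nat) (e : rel 'I_n) (s : seq 'I_n).
Hypotheses (sg : simple_graph e) (vo : vertex_order s).

Definition lower (r : nat) : {set 'I_n} := [set z | index z s < r].

Definition boundary (Q : {set 'I_n}) : {set 'I_n} :=
  [set w | (w \notin Q) && [exists u in Q, e u w]].

Lemma boundaryP (Q : {set 'I_n}) u w : u \in Q -> w \notin Q -> e u w -> w \in boundary Q.
Proof. by move=> uQ wQ euw; rewrite inE wQ; apply/existsP; exists u; rewrite uQ. Qed.

Lemma below_top r t z : index t s = r.-1 -> index z s < r -> z != t -> index z s < r.-1.
Proof.
move=> trank zr nzt.
have : index z s != index t s by apply: contra nzt => /eqP/(rank_inj vo) ->.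
by rewrite trank; lia.
Qed.

Section CriticalComponent.
Variables (r : nat) (x t : 'I_n).
Hypotheses (xr : index x s < r) (trank : index t s = r.-1).
Local Notation Q := (component e (lower r) x).
Hypothesis tQ : t \in Q.

Lemma comp_lower z : z \in Q -> index z s < r.
Proof.
move=> zQ; have xlow : x \in lower r by rewrite inE.
by have := subsetP (component_sub e xlow) z zQ; rewrite inE.
Qed.

Lemma comp_grow u w : u \in Q -> index w s < r -> e u w -> w \in Q.
Proof.
move=> uQ wr euw; have ur := comp_lower uQ; move: uQ; rewrite !inE => c.
by apply: connect_trans c (connect1 _); rewrite /induced euw !inE ur wr.
Qed.

Lemma boundary_rank w : w \in boundary Q -> r <= index w s.
Proof.
rewrite inE => /andP[wQ /existsP[u /andP[uQ euw]]].
by rewrite leqNgt; apply: contra wQ => wr; apply: comp_grow uQ wr euw.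
Qed.

Lemma comp_walk v u : v \in Q -> u \in Q -> v != u ->
  walk e (fun z => index z s < r) v u.
Proof.
have [se _] := sg; rewrite !inE => cv cu nvu.
apply: (@connect_walk _ (induced e (lower r))) => //.
  by move=> a b /and3P[-> _]; rewrite inE.
by apply: connect_trans cu; rewrite (sym_connect_sym (induced_sym se _)).
Qed.

Lemma comp_boundary_walk v w : v \in Q -> w \in boundary Q ->
  walk e (fun z => index z s < r) v w.
Proof.
move=> vQ; rewrite inE => /andP[_ /existsP[u /andP[uQ euw]]].
case: (eqVneq v u) => [->|nvu]; first exact: walk_edge.
exact: walk_rcons (comp_walk vQ uQ nvu) (comp_lower uQ) euw.
Qed.

Local Notation M := (t |: boundary Q).

Lemma separator_in_search_space v : v \in Q -> M \subset ss_vertices e s v.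
Proof.
move=> vQ; apply/subsetP=> z; rewrite in_setU1 => /orP[/eqP ->|zN]; rewrite inE.
  case: (eqVneq v t) => [->|nvt]; first exact: connect0.
  apply: (search_space_reach sg vo); first by rewrite trank (below_top trank) ?comp_lower.
  apply: walk_mono (walk_avoid_end (comp_walk vQ tQ nvt)) => z' /andP[lz nz].
  by rewrite trank (below_top trank).
apply: (search_space_reach sg vo); first exact: leq_trans (comp_lower vQ) (boundary_rank zN).
by apply: walk_mono (comp_boundary_walk vQ zN) => z' lz; apply: leq_trans lz (boundary_rank zN).
Qed.

Lemma separator_clique a b : a \in M -> b \in M -> a != b -> star_graph e s a b.
Proof.
have [se _] := sg.
have tw : forall w, w \in boundary Q ->
    walk e (fun z => index z s < minn (index t s) (index w s)) t w.
  move=> w wN.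
  have Dt : forall z, index z s < r -> z = t \/ (index z s < r) && (z != t).
    by move=> z lz; case: (eqVneq z t) => [->|nzt]; [left|right; rewrite lz].
  have W1 : walk e (fun z => (index z s < r) && (z != t)) t w.
    by case: (walk_tail Dt (comp_boundary_walk tQ wN)).
  apply: walk_mono W1 => z /andP[lz nzt].
  have := boundary_rank wN; have : index z s < r.-1.
    exact: below_top trank lz nzt.
  rewrite trank; lia.
rewrite !in_setU1 => /orP[/eqP ->|aN] /orP[/eqP ->|bN] nab.
- by rewrite eqxx in nab.
- by apply/(star_graphP sg vo); split=> //; apply: tw.
- apply/(star_graphP sg vo); split=> //.
  by rewrite minnC; apply: walk_sym se (tw a aN).
- apply/(star_graphP sg vo); split=> //.
  move: (aN); rewrite inE => /andP[_ /existsP[u /andP[uQ eua]]].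
  apply: (@walk_cons _ _ _ a u b); first by rewrite se.
    by apply: leq_trans (comp_lower uQ) _; rewrite leq_min !boundary_rank.
  apply: walk_mono (comp_boundary_walk uQ bN) => z lz.
  by apply: leq_trans lz _; rewrite leq_min !boundary_rank.
Qed.

Lemma edge_leaving_comp u w : u \in Q -> w \notin Q -> e u w -> w \in M.
Proof. by move=> uQ wQ euw; rewrite in_setU1 (boundaryP uQ wQ euw) orbT. Qed.

(* Components of [G - M] inside [Q] avoid [t], hence lie below rank [r - 1]. *)
Lemma inside_component y : y \in Q -> y \notin M ->
  component e (~: M) y \subset component e (lower r.-1) y.
Proof.
move=> yQ yM; apply/subsetP=> z; rewrite !inE => c.
have inv : forall u w, u \in Q :\ t -> induced e (~: M) u w ->
    w \in Q :\ t /\ induced e (lower r.-1) u w.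
  move=> u w /setD1P [ut uQ] /and3P[euw _]; rewrite in_setC in_setU1 negb_or => /andP[wt wM].
  have wQ : w \in Q by apply/negPn/negP=> wQ; move: wM; rewrite (boundaryP uQ wQ euw).
  by rewrite in_setD1 wt wQ /induced euw !inE !(below_top trank) ?comp_lower.
have yt : y != t by apply: contra yM => /eqP ->; rewrite setU11.
by have [] // := connect_inv (X := fun z => z \in Q :\ t) _ inv c; rewrite in_setD1 yt yQ.
Qed.

Lemma outside_component y : y \notin Q -> component e (~: M) y \subset ~: Q.
Proof.
have [se _] := sg; move=> yQ; apply/subsetP=> z; rewrite [z \in component _ _ _]inE in_setC => c.
have inv : forall u w, u \notin Q -> induced e (~: M) u w ->
    w \notin Q /\ induced e (~: M) u w.
  move=> u w uQ E; split=> //; move/and3P: E => [euw uM _].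
  by apply/negP=> wQ; move: uM; rewrite in_setC (edge_leaving_comp wQ uQ) // se.
exact: (proj2 (connect_inv (X := fun z => z \notin Q) yQ inv c)).
Qed.

Lemma separator_balanced :
  n < 3 * #|Q| ->
  (forall y, index y s < r.-1 -> 3 * #|component e (lower r.-1) y| <= n) ->
  balanced_sep e M.
Proof.
have [se _] := sg; move=> Qbig minimal.
have cQ : #|Q| + #|~: Q| = n by rewrite cardsC card_ord.
case: (leqP (3 * #|Q|) (2 * n)) => [small|big].
  exists (Q :\ t), (~: M :\: Q); split.
  - exact: subsetT.
  - rewrite setTD; apply/setP=> z; rewrite in_setU in_setD1 !in_setD !in_setC in_setU1.
    case zQ: (z \in Q); rewrite /= ?andbT ?andbF //.
    have zN : z \notin boundary Q by rewrite inE zQ.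
    by rewrite (negbTE zN) !orbF.
  - rewrite -setI_eq0; apply/eqP/setP=> z; rewrite !inE.
    by case: (connect _ x z); rewrite ?andbF.
  - move=> u w /setD1P [_ uQ] /setDP [wM wQ]; apply/negP=> euw.
    by move: wM; rewrite in_setC (edge_leaving_comp uQ wQ euw).
  - rewrite cardsT card_ord; apply/andP; split.
      by apply: leq_trans small; rewrite leq_mul2l /= subset_leq_card // subD1set.
    have : #|~: M :\: Q| <= #|~: Q|.
      by apply: subset_leq_card; apply/subsetP=> z /setDP [_]; rewrite in_setC.
    by move: Qbig cQ; move: #|Q| #|~: Q| #|~: M :\: Q| => a b c; lia.
apply: balanced_of_small_components => // y; rewrite in_setC => yM.
case yQ: (y \in Q).
  have yt : y != t by apply: contra yM => /eqP ->; rewrite setU11.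
  apply: leq_trans (minimal y _); last by rewrite (below_top trank) ?comp_lower.
  by rewrite leq_mul2l /= subset_leq_card // inside_component.
rewrite (leq_trans (leq_mul (leqnn 3) (subset_leq_card (outside_component (negbT yQ))))) //.
by move: big cQ; move: #|Q| #|~: Q| => a b; lia.
Qed.

End CriticalComponent.

(* Let [r] be least such that some component [Q] of [G[lower r]] has more than
   [n/3] vertices.  Minimality forces the vertex [t] of rank [r - 1] into [Q]. *)
Lemma critical_threshold : connected_graph e -> 0 < n ->
  exists r x t, [/\ index x s < r, index t s = r.-1, t \in component e (lower r) x,
    n < 3 * #|component e (lower r) x| &
    forall y, index y s < r.-1 -> 3 * #|component e (lower r.-1) y| <= n].
Proof.
move=> conn n0.
have ss : size s = n by rewrite (perm_size vo) size_enum_ord.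
have rank_lt z : index z s < n by rewrite -{2}ss index_mem (vo_mem vo).
pose big r := [exists x, (index x s < r) && (n < 3 * #|component e (lower r) x|)].
have big_n : big n.
  apply/existsP; exists (Ordinal n0); rewrite rank_lt /=.
  suff -> : component e (lower n) (Ordinal n0) = setT by rewrite cardsT card_ord; lia.
  apply/setP=> y; rewrite !inE; apply: connect_sub (conn _ y) => u w euw.
  by apply: connect1; rewrite /induced euw !inE !rank_lt.
case: (ex_minnP (ex_intro big n big_n)) => r /existsP [x /andP[xr Qbig]] rmin.
have r0 : 0 < r by case: r xr {Qbig rmin}.
have notbig : ~~ big r.-1 by apply/negP=> /rmin; lia.
have minimal y : index y s < r.-1 -> 3 * #|component e (lower r.-1) y| <= n.
  move=> yr; rewrite leqNgt; apply: contra notbig => H.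
  by apply/existsP; exists y; rewrite yr.
pose t := nth x s r.-1.
have trank : index t s = r.-1.
  have rn : r <= n := rmin _ big_n.
  by rewrite /t index_uniq ?(vo_uniq vo) // ss; lia.
exists r, x, t; split=> //.
apply/negPn/negP=> tQ; suff : 3 * #|component e (lower r) x| <= n by rewrite leqNgt Qbig.
have xt : x != t by apply: contra tQ => /eqP <-; rewrite inE connect0.
apply: leq_trans (minimal x (below_top trank xr xt)); rewrite leq_mul2l /=.
apply: subset_leq_card; apply/subsetP=> y; rewrite !inE => c.
have inv : forall u w, u \in component e (lower r) x -> induced e (lower r) u w ->
    w \in component e (lower r) x /\ induced e (lower r.-1) u w.
  move=> u w uQ E; move/and3P: (E) => [euw ur wr].
  have wQ : w \in component e (lower r) x by move: wr; rewrite inE => /(comp_grow xr uQ)/(_ euw).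
  have ut : u != t by apply: contra tQ => /eqP <-.
  have wt : w != t by apply: contra tQ => /eqP <-.
  by split=> //; rewrite /induced euw !inE !(below_top trank) ?(comp_lower xr).
by have [] // := connect_inv _ inv c; rewrite inE connect0.
Qed.

Lemma lower_bound_structure : connected_graph e -> 0 < n ->
  exists Q M : {set 'I_n}, [/\ n < 3 * #|Q|, balanced_sep e M,
    forall v, v \in Q -> M \subset ss_vertices e s v &
    forall x y, x \in M -> y \in M -> x != y -> star_graph e s x y].
Proof.
move=> conn n0; have [r [x [t [xr trank tQ Qbig minimal]]]] := critical_threshold conn n0.
exists (component e (lower r) x), (t |: boundary (component e (lower r) x)); split=> //.
- exact: separator_balanced.
- by move=> v; apply: separator_in_search_space.
- by move=> a b; apply: separator_clique.
Qed.

End LowerBound.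

Section InducedCopy.
Variables (n : nat) (e : rel 'I_n) (U : {set 'I_n}).

Definition induced_copy : rel 'I_#|U| := fun i j => e (enum_val i) (enum_val j).

Lemma induced_copy_simple : simple_graph e -> simple_graph induced_copy.
Proof. by case=> se ie; split=> [i j | i]; [apply: se | apply: ie]. Qed.

Lemma induced_copy_in_class (K : graph_class) :
  subgraph_closed K -> simple_graph e -> K n e -> K #|U| induced_copy.
Proof.
move=> scl sg Ke; apply: (scl n #|U| e induced_copy enum_val) => //.
- exact: induced_copy_simple.
- exact: enum_val_inj.
Qed.

Lemma mem_imset_enum_val (X : {set 'I_#|U|}) z (zU : z \in U) :
  (z \in enum_val @: X) = (enum_rank_in zU z \in X).
Proof. by rewrite -{1}(enum_rankK_in zU zU) (mem_imset _ _ enum_val_inj). Qed.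

Lemma imset_enum_val_sub (X : {set 'I_#|U|}) : enum_val @: X \subset U.
Proof. by apply/subsetP=> z /imsetP [i _ ->]; apply: enum_valP. Qed.

Lemma balanced_sep_from_copy S :
  balanced_sep induced_copy S -> balanced_sep_in e U (enum_val @: S).
Proof.
move=> [A [B [_ ABS dAB noAB sz]]]; exists (enum_val @: A), (enum_val @: B); split.
- exact: imset_enum_val_sub.
- apply/setP=> z; rewrite in_setU in_setD; case: (boolP (z \in U)) => zU.
    by rewrite !(mem_imset_enum_val _ zU) -in_setU ABS !inE andbT.
  rewrite andbF; apply/negbTE; rewrite negb_or.
  by apply/andP; split; apply: contra zU => /(subsetP (imset_enum_val_sub _)).
- rewrite -setI_eq0 -imsetI; last by move=> i j _ _; apply: enum_val_inj.
  by rewrite (disjoint_setI0 dAB) imset0.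
- by move=> x y /imsetP [i iA ->] /imsetP [j jB ->]; apply: noAB.
- rewrite !card_imset; try exact: enum_val_inj.
  by move: sz; rewrite cardsT card_ord.
Qed.

End InducedCopy.

Lemma min_separator_bound n (e : rel 'I_n) (K : graph_class) alpha c (U S : {set 'I_n}) :
  simple_graph e -> K n e -> subgraph_closed K -> small_separators K alpha c ->
  (forall S', balanced_sep_in e U S' -> #|S| <= #|S'|) ->
  Rle (INR #|S|) (Rmult c (rpow (INR #|U|) alpha)).
Proof.
move=> sg Ke scl ssep Smin.
have [S' [bal bnd]] := ssep _ _ (induced_copy_simple U sg) (induced_copy_in_class U scl sg Ke).
have := Smin _ (balanced_sep_from_copy bal); rewrite card_imset; last exact: enum_val_inj.
by move=> /leP/le_INR H; apply: Rle_trans H bnd.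
Qed.

Lemma nd_order_enum n (e : rel 'I_n) U sU : nd_order e U sU -> uniq sU /\ sU =i U.
Proof.
elim=> {U sU} [|U S A B sA sB sS _ [SU /setP ABU dAB _ _] _ _ [uA mA] _ [uB mB] pS].
  by split=> // x; rewrite inE.
have mS : sS =i S by move=> x; rewrite (perm_mem pS) mem_enum.
have notS x : x \in A :|: B -> x \notin S by rewrite ABU => /setDP [].
split; last first.
  move=> x; rewrite !mem_cat mA mB mS orbA -in_setU ABU in_setD.
  by case: (boolP (x \in S)) => xS; rewrite ?(subsetP SU x xS) ?orbT ?orbF.
rewrite !cat_uniq uA uB (perm_uniq pS) enum_uniq /= andbT; apply/andP; split.
  apply/hasP=> -[x]; rewrite mem_cat mB mS mA => /orP[xB xA|xS xA].
    by rewrite (disjointFr dAB xA) in xB.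
  by move: (notS x); rewrite in_setU xA xS => /(_ isT).
apply/hasP=> -[x]; rewrite mS mB => xS xB.
by move: (notS x); rewrite in_setU xB orbT xS => /(_ isT).
Qed.

Lemma nd_vertex_order n (e : rel 'I_n) s : nested_dissection_order e s -> vertex_order s.
Proof.
move=> /nd_order_enum [us ms]; apply: uniq_perm; rewrite ?enum_uniq // => x.
by rewrite ms mem_enum !inE.
Qed.

Lemma bal_sep_in_sym n (e : rel 'I_n) U S A B : symmetric e ->
  bal_sep_in e U S A B -> bal_sep_in e U S B A.
Proof.
move=> se [SU ABU dAB noAB sz]; split=> //.
- by rewrite setUC.
- by rewrite disjoint_sym.
- by move=> x y xB yA; rewrite se noAB.
- by rewrite andbC.
Qed.

Section NestedDissection.
Variables (n : nat) (e : rel 'I_n) (s : seq 'I_n).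
Hypotheses (sg : simple_graph e) (vo : vertex_order s).

Definition boundary_above (U : {set 'I_n}) : Prop :=
  forall u w u', u \in U -> w \notin U -> e u w -> u' \in U -> index u' s < index w s.

Lemma up_arc_exit (W : {set 'I_n}) x y : x \in W ->
  (forall u w, u \in W -> w \notin W -> e u w -> index x s < index w s) ->
  up_graph e s x y -> y \in W \/ exists u, [/\ u \in W, y \notin W & e u y].
Proof.
move=> xW HN /andP[/(star_graphP sg vo) [_ W'] lxy].
have Wk : walk e (fun z => index z s < index x s) x y.
  by apply: walk_mono W' => z lz; apply: leq_trans lz (geq_minl _ _).
elim: Wk xW => {y lxy W'} [a b eab|a z b eaz Dz _ IH] aW.
  by case bW: (b \in W); [left | right; exists a; split; rewrite ?bW].
apply: IH; apply/negPn/negP=> zW.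
by have := HN a z aW zW eaz; rewrite ltnNge (ltnW Dz).
Qed.

Lemma search_space_confined (U S C : {set 'I_n}) v y :
  S \subset U -> C \subset U :\: S ->
  (forall u w, u \in C -> w \notin C -> e u w -> w \in S \/ w \notin U) ->
  (forall a z, a \in U :\: S -> z \in S -> index a s < index z s) ->
  boundary_above U ->
  v \in C \/ v \in S -> connect (up_graph e s) v y -> y \in U -> y \in C \/ y \in S.
Proof.
move=> SU CUS Cnb Sabove Uabove vCS c yU.
(* Invariant: in [C], in [S], or ranked above all of [U]. *)
pose X y := [|| y \in C, y \in S | [forall (u | u \in U), index u s < index y s]].
have above_all u z : u \in U -> z \notin U -> e u z -> X z.
  by move=> uU zU euz; rewrite /X; apply/or3P/Or33/forall_inP => u' /(Uabove u z u' uU zU euz).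
have step : forall x z, X x -> up_graph e s x z -> X z /\ up_graph e s x z.
  move=> x z Xx uxz; split=> //; have lxz : index x s < index z s by case/andP: uxz.
  case/or3P: Xx => [xC|xS|/forall_inP xa].
  - have [xU _] := setDP (subsetP CUS x xC).
    have HN u w : u \in C -> w \notin C -> e u w -> index x s < index w s.
      move=> uC wC euw; case: (Cnb u w uC wC euw) => [wS|wU].
        by apply: Sabove wS; apply: (subsetP CUS).
      by apply: Uabove (euw) xU; have [] := setDP (subsetP CUS u uC).
    case: (up_arc_exit xC HN uxz) => [zC|[u [uC zC euz]]]; first by rewrite /X zC.
    case: (Cnb u z uC zC euz) => [zS|zU]; first by rewrite /X zS orbT.
    by apply: above_all euz => //; have [] := setDP (subsetP CUS u uC).
  - have xU := subsetP SU x xS.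
    have HN u w : u \in U -> w \notin U -> e u w -> index x s < index w s.
      by move=> uU wU euw; apply: Uabove uU wU euw xU.
    case: (up_arc_exit xU HN uxz) => [zU|[u [uU zU euz]]]; last exact: above_all euz.
    case zS: (z \in S); first by rewrite /X zS orbT.
    have zUS : z \in U :\: S by rewrite in_setD zS zU.
    by have := Sabove z x zUS xS; rewrite ltnNge (ltnW lxz).
  - by rewrite /X; apply/or3P/Or33/forall_inP => u uU; apply: ltn_trans (xa u uU) lxz.
have Xv : X v by rewrite /X; case: vCS => ->; rewrite ?orbT.
have [_ Xy] := connect_inv Xv step c.
case/or3P: Xy => [->|->|/forall_inP ya]; [by left | by right |].
by have := ya y yU; rewrite ltnn.
Qed.

Lemma dissection_part (U S A B : {set 'I_n}) v :
  bal_sep_in e U S A B -> boundary_above U ->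
  (forall a z, a \in U :\: S -> z \in S -> index a s < index z s) -> v \in A ->
  boundary_above A /\
  #|ss_vertices e s v :&: U| <= #|ss_vertices e s v :&: A| + #|S|.
Proof.
move=> [SU /setP ABU _ noAB _] Uabove Sabove vA.
have AUS : A \subset U :\: S by apply/subsetP=> x xA; rewrite -ABU in_setU xA.
have Anb u w : u \in A -> w \notin A -> e u w -> w \in S \/ w \notin U.
  move=> uA wA euw; case: (boolP (w \in S)) => wS; [by left | right].
  apply/negP=> wU; have : w \in A :|: B by rewrite ABU in_setD wS.
  by rewrite in_setU (negbTE wA) => /(noAB u w uA); rewrite euw.
split.
  move=> u w u' uA wA euw u'A; case: (Anb u w uA wA euw) => [wS|wU].
    exact: Sabove (subsetP AUS u' u'A) wS.
  have inU x : x \in A -> x \in U by move=> /(subsetP AUS) /setDP [].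
  exact: Uabove (inU u uA) wU euw (inU u' u'A).
apply: leq_trans (leq_card_setU _ _); apply: subset_leq_card; apply/subsetP=> y.
rewrite in_setI => /andP[yss yU]; rewrite in_setU in_setI yss.
have c : connect (up_graph e s) v y by rewrite inE in yss.
by case: (search_space_confined SU AUS Anb Sabove Uabove (or_introl vA) c yU) => ->; rewrite ?orbT.
Qed.

Lemma dissection_separator (U S A B : {set 'I_n}) v :
  bal_sep_in e U S A B -> boundary_above U ->
  (forall a z, a \in U :\: S -> z \in S -> index a s < index z s) -> v \in S ->
  #|ss_vertices e s v :&: U| <= #|S|.
Proof.
move=> [SU _ _ _ _] Uabove Sabove vS; apply: subset_leq_card; apply/subsetP=> y.
rewrite in_setI inE => /andP[c yU].
have noC : set0 \subset U :\: S by apply: sub0set.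
have Cnb u w : u \in set0 -> w \notin set0 -> e u w -> w \in S \/ w \notin U by rewrite inE.
by case: (search_space_confined SU noC Cnb Sabove Uabove (or_intror vS) c yU); rewrite ?inE.
Qed.

Lemma separator_ranked_last pre post (U S A B : {set 'I_n}) sA sB sS :
  s = pre ++ (sA ++ sB ++ sS) ++ post -> bal_sep_in e U S A B ->
  sA =i A -> sB =i B -> sS =i S ->
  forall a z, a \in U :\: S -> z \in S -> index a s < index z s.
Proof.
move=> sE [_ /setP ABU _ _ _] mA mB mS a z aUS zS.
have sLR : s = (pre ++ sA ++ sB) ++ (sS ++ post) by rewrite sE -!catA.
have us := vo_uniq vo; rewrite sLR in us *.
set l := pre ++ sA ++ sB in us *; set r := sS ++ post in us *.
have al : a \in l by rewrite !mem_cat mA mB -in_setU ABU aUS orbT.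
have zr : z \in r by rewrite mem_cat mS zS.
have zl : z \notin l by move: us; rewrite cat_uniq => /and3P[_ /hasPn/(_ z zr)].
rewrite [index a _]index_cat [index z _]index_cat al (negbTE zl).
apply: leq_trans (leq_addr _ _).
by rewrite index_mem.
Qed.

(* The induction follows
   the recursive structure of the order, whose blocks are ranked consecutively. *)
Lemma nd_search_space_bound (F : nat -> R) :
  (forall U S A B, bal_sep_in e U S A B ->
     (forall S', balanced_sep_in e U S' -> #|S| <= #|S'|) ->
     [/\ Rle (Rplus (INR #|S|) (F #|A|)) (F #|U|),
         Rle (Rplus (INR #|S|) (F #|B|)) (F #|U|) & Rle (INR #|S|) (F #|U|)]) ->
  forall U sU, nd_order e U sU -> forall pre post, s = pre ++ sU ++ post ->
  boundary_above U ->
  forall v, v \in U -> Rle (INR #|ss_vertices e s v :&: U|) (F #|U|).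
Proof.
have [se _] := sg; have INRle a b : a <= b -> Rle (INR a) (INR b) by move=> /leP /le_INR.
move=> Fstep U sU nd; elim: nd => {U sU} [|U S A B sA sB sS _ bal Smin ndA IHA ndB IHB pS]
  pre post sE Uabove v vU; first by rewrite inE in vU.
have [FA FB FS] := Fstep U S A B bal Smin.
have [[_ mA] [_ mB]] := (nd_order_enum ndA, nd_order_enum ndB).
have mS : sS =i S by move=> x; rewrite (perm_mem pS) mem_enum.
have Sabove := separator_ranked_last sE bal mA mB mS.
case: (boolP (v \in S)) => vS.
  by apply: Rle_trans FS; apply: INRle; apply: dissection_separator bal Uabove Sabove vS.
have : v \in A :|: B by case: bal => _ -> _ _ _; rewrite in_setD vS vU.
rewrite in_setU => /orP[vA|vB].
- have [Aabove cnt] := dissection_part bal Uabove Sabove vA.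
  have sE' : s = pre ++ sA ++ (sB ++ sS ++ post) by rewrite sE -!catA.
  have := IHA _ _ sE' Aabove v vA.
  by have := INRle _ _ cnt; rewrite plus_INR; lra.
- have [Babove cnt] := dissection_part (bal_sep_in_sym se bal) Uabove Sabove vB.
  have sE' : s = (pre ++ sA) ++ sB ++ (sS ++ post) by rewrite sE -!catA.
  have := IHB _ _ sE' Babove v vB.
  by have := INRle _ _ cnt; rewrite plus_INR; lra.
Qed.

End NestedDissection.

Section RealBounds.
Local Open Scope R_scope.

Lemma rpow_ge0 x a : 0 <= rpow x a.
Proof. rewrite /rpow; case: Rle_dec => _ /=; [lra | apply: Rlt_le; apply: exp_pos]. Qed.

Lemma rpow_pos x a : 0 < x -> rpow x a = Rpower x a.
Proof. by rewrite /rpow; case: Rle_dec => h /= hx; [lra|]. Qed.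

Definition shrink (alpha : R) : R := Rpower (2/3) alpha.

Lemma shrink_bounds alpha : 0 < alpha -> 0 < shrink alpha < 1.
Proof.
move=> ha; have s0 : 0 < shrink alpha by apply: exp_pos.
have inv : shrink alpha * Rpower (3/2) alpha = 1.
  rewrite /shrink Rpower_mult_distr; try lra.
  by rewrite (_ : 2/3 * (3/2) = 1); [rewrite /Rpower ln_1 Rmult_0_r exp_0 | field].
have := Rpower_lt (3/2) 0 alpha ltac:(lra) ha; rewrite Rpower_O; [nra | lra].
Qed.

Lemma rpow_two_thirds alpha (a u : nat) : 0 < alpha -> (3 * a <= 2 * u)%N ->
  rpow (INR a) alpha <= shrink alpha * rpow (INR u) alpha.
Proof.
move=> ha hau; have [s0 _] := shrink_bounds ha.
move: hau; case: a => [|a] hau.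
  have -> : rpow (INR 0) alpha = 0 by rewrite /rpow; case: Rle_dec => h /=; [| simpl in h]; lra.
  by apply: Rmult_le_pos; [lra | apply: rpow_ge0].
have hr : 3 * INR a.+1 <= 2 * INR u.
  by have := le_INR _ _ (elimT leP hau); rewrite !mult_INR /=; lra.
have hpos : 0 < INR a.+1 by apply: lt_0_INR; apply/ltP.
rewrite !rpow_pos /shrink ?Rpower_mult_distr; try lra.
apply: Rle_Rpower_l; lra.
Qed.

(* The constant of the nested-dissection bound [|SS(v)| <= nd_const * n^alpha]:
   it absorbs the geometric series of separator sizes [c (2/3)^(k alpha) n^alpha]. *)
Definition nd_const (alpha c : R) : R := c / (1 - shrink alpha).

Lemma nd_const_pos alpha c : 0 < alpha -> 0 < c -> 0 < nd_const alpha c.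
Proof. by move=> ha hc; have [_ ?] := shrink_bounds ha; apply: Rdiv_lt_0_compat; lra. Qed.

Lemma nd_const_step alpha c x y z : 0 < alpha -> 0 < c -> 0 <= z ->
  x <= c * z -> y <= shrink alpha * z -> x + nd_const alpha c * y <= nd_const alpha c * z.
Proof.
move=> ha hc hz hx hy; have [s0 s1] := shrink_bounds ha.
have K0 := nd_const_pos ha hc.
have Kc : nd_const alpha c * (1 - shrink alpha) = c by rewrite /nd_const; field; lra.
have := Rmult_le_compat_l _ _ _ (Rlt_le _ _ K0) hy; nra.
Qed.

Lemma large_n alpha c' : 0 < alpha -> 0 < c' ->
  exists n0 : nat, forall n : nat, (n0 <= n)%N -> 0 < INR n /\ 2 <= c' * rpow (INR n) alpha.
Proof.
move=> ha hc; pose N := Rpower (2 / c') (1 / alpha).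
have [n0 hn0] := INR_unbounded N; exists n0 => n /leP/le_INR hn.
have Npos : 0 < N by apply: exp_pos.
have npos : 0 < INR n by lra.
split=> //; rewrite rpow_pos //.
have : Rpower N alpha <= Rpower (INR n) alpha by apply: Rle_Rpower_l; lra.
rewrite /N Rpower_mult (_ : 1 / alpha * alpha = 1); last by field; lra.
rewrite Rpower_1; last by apply: Rdiv_lt_0_compat; lra.
move=> h; have := Rmult_le_compat_l _ _ _ (Rlt_le _ _ hc) h.
by rewrite (_ : c' * (2 / c') = 2) //; field; lra.
Qed.

Lemma max_ratio k C x y0 y : 0 <= k -> 0 <= y0 -> k <= C -> x <= k * y0 -> y0 <= y ->
  x <= C * y.
Proof.
move=> hk hy0 hkC hx hy.
have : k * y0 <= C * y0 by apply: Rmult_le_compat_r.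
have : C * y0 <= C * y by apply: Rmult_le_compat_l; lra.
lra.
Qed.

Lemma avg_ratio k C x y0 sx sy nn q : 0 < nn -> nn < 3 * q -> 0 <= x -> 0 <= k -> 0 <= y0 ->
  3 * k <= C -> x <= k * y0 -> sx <= nn * x -> q * y0 <= sy -> sx / nn <= C * (sy / nn).
Proof.
move=> hn hq hx hk hy0 hC hxk hsx hsy.
have h1 : nn * x <= 3 * q * (k * y0).
  have : 0 <= k * y0 by apply: Rmult_le_pos.
  have : nn * x <= nn * (k * y0) by apply: Rmult_le_compat_l; lra.
  nra.
have h2 : 3 * q * (k * y0) <= C * sy.
  have qy0 : 0 <= q * y0 by nra.
  have : 3 * k * (q * y0) <= C * (q * y0) by apply: Rmult_le_compat_r.
  have : C * (q * y0) <= C * sy by apply: Rmult_le_compat_l; lra.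
  nra.
rewrite /Rdiv -Rmult_assoc; apply: Rmult_le_compat_r; last lra.
by apply: Rlt_le; apply: Rinv_0_lt_compat.
Qed.

Lemma square_le_pairs a x m u : 0 <= x -> x <= a * m -> 2 <= m -> 2 * u + m = m * m ->
  x * x <= 4 * (a * a) * u.
Proof.
move=> hx hxm hm hu.
have hsq : x * x <= (a * m) * (a * m) by apply: Rmult_le_compat.
have hm4 : m * m <= 4 * u by nra.
have : a * a * (m * m) <= a * a * (4 * u) by apply: Rmult_le_compat_l; nra.
nra.
Qed.

End RealBounds.

Definition up_pairs (T : finType) (rk : T -> nat) (M : {set T}) : {set T * T} :=
  [set p | [&& p.1 \in M, p.2 \in M & rk p.1 < rk p.2]].

Lemma card_up_pairs (T : finType) (rk : T -> nat) (M : {set T}) : injective rk ->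
  2 * #|up_pairs rk M| + #|M| = #|M| * #|M|.
Proof.
move=> rkinj; set UP := up_pairs rk M.
pose DN := (fun p : T * T => (p.2, p.1)) @^-1: UP.
pose DG := [set p : T * T | (p.1 \in M) && (p.2 == p.1)].
have cDN : #|DN| = #|UP| by apply: card_preimset => -[a b] [c d] [-> ->].
have cDG : #|DG| = #|M|.
  have -> : DG = (fun x => (x, x)) @: M.
    apply/setP=> -[a b]; rewrite inE /=; apply/andP/imsetP.
      by move=> [aM /eqP ->]; exists a.
    by move=> [x xM [-> ->]]; rewrite xM eqxx.
  by apply: card_imset => x y [].
have E : setX M M = (UP :|: DN) :|: DG.
  apply/setP=> -[a b]; rewrite !inE /=.
  case aM: (a \in M); case bM: (b \in M); rewrite /= ?andbF //=.
    by case: (ltngtP (rk a) (rk b)) => //= /rkinj ->; rewrite eqxx.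
  by apply/esym/negbTE; apply/eqP=> Eba; rewrite Eba aM in bM.
have d1 : UP :&: DN = set0.
  apply/setP=> -[x y]; rewrite !inE /=.
  by apply/negbTE/negP=> /and4P[/and3P[_ _ h1] _ _ h2]; lia.
have d2 : (UP :|: DN) :&: DG = set0.
  apply/setP=> -[x y]; rewrite !inE /=; apply/negbTE/negP.
  by move=> /andP[/orP[/and3P[_ _ h1]|/and3P[_ _ h1]] /andP[_ /eqP Eyx]]; subst y; lia.
have := cardsUI UP DN; rewrite d1 cards0 addn0 cDN => c1.
have := cardsUI (UP :|: DN) DG; rewrite d2 cards0 addn0 c1 cDG -E cardsX.
by move: #|UP| #|M| => u m; lia.
Qed.

Lemma sum_le_max n (f : 'I_n -> nat) : \sum_(v : 'I_n) f v <= n * \max_(v : 'I_n) f v.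
Proof.
rewrite -[X in X * _]card_ord -sum_nat_const; apply: leq_sum => v _; exact: leq_bigmax.
Qed.

Lemma sum_ge n (f : 'I_n -> nat) (Q : {set 'I_n}) k :
  (forall v, v \in Q -> k <= f v) -> #|Q| * k <= \sum_(v : 'I_n) f v.
Proof.
move=> H; rewrite -sum_nat_const [X in _ <= X](bigID (mem Q)) /=.
by apply: leq_trans (leq_addr _ _); apply: leq_sum.
Qed.

Lemma ss_arcs_le n (e : rel 'I_n) s v :
  #|ss_arcs e s v| <= #|ss_vertices e s v| * #|ss_vertices e s v|.
Proof.
rewrite -cardsX; apply: subset_leq_card; apply/subsetP=> -[x y].
by rewrite inE /= => /and3P[h1 h2 _]; rewrite in_setX h1 h2.
Qed.

Lemma nd_search_space_small alpha c (K : graph_class) n (e : rel 'I_n) snd :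
  Rlt R0 alpha -> Rlt R0 c -> subgraph_closed K -> small_separators K alpha c ->
  simple_graph e -> K n e -> nested_dissection_order e snd ->
  forall v, Rle (INR #|ss_vertices e snd v|) (Rmult (nd_const alpha c) (rpow (INR n) alpha)).
Proof.
move=> ha hc scl ssep sg Ke nd v.
pose F m := Rmult (nd_const alpha c) (rpow (INR m) alpha).
have Fstep U S A B : bal_sep_in e U S A B ->
    (forall S', balanced_sep_in e U S' -> #|S| <= #|S'|) ->
    [/\ Rle (Rplus (INR #|S|) (F #|A|)) (F #|U|),
        Rle (Rplus (INR #|S|) (F #|B|)) (F #|U|) & Rle (INR #|S|) (F #|U|)].
  move=> [_ _ _ _ /andP[hA hB]] Smin.
  have hS := min_separator_bound sg Ke scl ssep Smin.
  have hU := rpow_ge0 (INR #|U|) alpha.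
  split; try by apply: nd_const_step => //; apply: rpow_two_thirds.
  (* The separator alone is the case of an empty part. *)
  have := @nd_const_step alpha c _ 0 _ ha hc hU hS.
  rewrite Rmult_0_r Rplus_0_r; apply.
  by apply: Rmult_le_pos; [apply: Rlt_le; case: (shrink_bounds ha) |].
have Tabove : boundary_above e snd setT by move=> u w u' _; rewrite in_setT.
have := nd_search_space_bound sg (nd_vertex_order nd) Fstep nd
  (pre := [::]) (post := [::]) (esym (cats0 snd)) Tabove (in_setT v).
by rewrite setIT cardsT card_ord.
Qed.

Lemma search_space_lower n (e : rel 'I_n) s :
  simple_graph e -> connected_graph e -> vertex_order s -> 0 < n ->
  exists Q M : {set 'I_n}, [/\ n < 3 * #|Q|, balanced_sep e M,
    forall v, v \in Q -> #|M| <= #|ss_vertices e s v| &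
    forall v, v \in Q -> #|up_pairs (fun x => index x s) M| <= #|ss_arcs e s v|].
Proof.
move=> sg conn vo n0.
have [Q [M [Qbig Msep MSS Mclique]]] := lower_bound_structure sg vo conn n0.
exists Q, M; split=> // v vQ; apply: subset_leq_card; first exact: MSS.
apply/subsetP=> -[x y]; rewrite inE /= => /and3P[xM yM lxy].
rewrite inE /= !(subsetP (MSS v vQ)) //= /up_graph lxy andbT Mclique //.
by apply/eqP=> Exy; move: lxy; rewrite Exy ltnn.
Qed.

Lemma compare_orders n (e : rel 'I_n) snd s (Q M : {set 'I_n}) (a : R) :
  vertex_order s -> 0 < n -> n < 3 * #|Q| -> Rle R0 a -> Rle 2 (INR #|M|) ->
  (forall v, Rle (INR #|ss_vertices e snd v|) (Rmult a (INR #|M|))) ->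
  (forall v, v \in Q -> #|M| <= #|ss_vertices e s v|) ->
  (forall v, v \in Q -> #|up_pairs (fun x => index x s) M| <= #|ss_arcs e s v|) ->
  let C := Rmult 12 (Rmult (a + 1) (a + 1)) in
  [/\ Rle (INR (max_ss_vertices e snd)) (Rmult C (INR (max_ss_vertices e s))),
      Rle (INR (max_ss_arcs e snd)) (Rmult C (INR (max_ss_arcs e s))),
      Rle (avg_ss_vertices e snd) (Rmult C (avg_ss_vertices e s)) &
      Rle (avg_ss_arcs e snd) (Rmult C (avg_ss_arcs e s))].
Proof.
move=> vo n0 Qbig a0 m2 ndV MV MA C.
have INRle x y : x <= y -> Rle (INR x) (INR y) by move=> /leP /le_INR.
have INRmul x y z : x * y <= z -> Rle (Rmult (INR x) (INR y)) (INR z).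
  by move=> /INRle; rewrite mult_INR.
have INRmul' x y z : z <= x * y -> Rle (INR z) (Rmult (INR x) (INR y)).
  by move=> /INRle; rewrite mult_INR.
have [v0 v0Q] : exists v, v \in Q by apply/set0Pn; apply: contraTneq Qbig => ->; rewrite cards0.
have hu : Rplus (Rmult 2 (INR #|up_pairs (fun x => index x s) M|)) (INR #|M|) =
    Rmult (INR #|M|) (INR #|M|).
  have : INR (2 * #|up_pairs (fun x => index x s) M| + #|M|) = INR (#|M| * #|M|).
    by rewrite card_up_pairs //; apply: rank_inj vo.
  by rewrite plus_INR !mult_INR /=; lra.
have hn : Rlt R0 (INR n) by apply: lt_0_INR; apply/ltP.
have hq : Rlt (INR n) (Rmult 3 (INR #|Q|)).
  by have := lt_INR _ _ (elimT ltP Qbig); rewrite mult_INR /=; lra.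
have In0 : 0 < #|'I_n| by rewrite card_ord.
have [vmax Evmax] := eq_bigmax (fun v => #|ss_vertices e snd v|) In0.
have Vn : Rle (INR (max_ss_vertices e snd)) (Rmult a (INR #|M|)) by rewrite /max_ss_vertices Evmax.
have An : max_ss_arcs e snd <= max_ss_vertices e snd * max_ss_vertices e snd.
  apply/bigmax_leqP => v _; apply: leq_trans (ss_arcs_le e snd v) _.
  by apply: leq_mul; apply: leq_bigmax.
have Vp : #|M| <= max_ss_vertices e s by apply: leq_trans (MV v0 v0Q) (leq_bigmax v0).
have Ap := leq_trans (MA v0 v0Q) (leq_bigmax (F := fun v => #|ss_arcs e s v|) v0).
have Vn0 := pos_INR (max_ss_vertices e snd).
have Anu := square_le_pairs Vn0 Vn m2 hu.
have hC1 : Rle (Rmult 3 a) C by rewrite /C; nra.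
have hC2 : Rle (Rmult 3 (Rmult 4 (Rmult a a))) C by rewrite /C; nra.
split.
- by apply: (max_ratio a0 (pos_INR _)) Vn (INRle _ _ Vp); lra.
- apply: (max_ratio (k := Rmult 4 (Rmult a a))) (pos_INR _) _ _ (INRle _ _ Ap); try nra.
  by apply: Rle_trans Anu; apply: INRmul' An.
- apply: (avg_ratio hn hq (pos_INR _) a0 (pos_INR _) hC1 Vn); first exact: INRmul' (sum_le_max _).
  exact: INRmul (sum_ge MV).
- apply: (avg_ratio hn hq (pos_INR _) _ (pos_INR _) hC2 _); first nra.
  + by apply: Rle_trans Anu; apply: INRmul' An.
  + exact: INRmul' (sum_le_max _).
  + exact: INRmul (sum_ge MA).
Qed.

Theorem mainTheorem3 (alpha c c' : R) :
  Rlt R0 alpha -> Rlt alpha R1 -> Rlt R0 c -> Rlt R0 c' ->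
  exists (C : R) (n0 : nat),
    forall (K : graph_class),
      subgraph_closed K -> small_separators K alpha c ->
      forall (n : nat) (e : rel 'I_n),
        simple_graph e -> K n e -> connected_graph e -> n0 <= n ->
        (forall S, balanced_sep e S -> Rle (Rmult c' (rpow (INR n) alpha)) (INR #|S|)) ->
        forall (snd s : seq 'I_n),
          nested_dissection_order e snd -> vertex_order s ->
          [/\ Rle (INR (max_ss_vertices e snd)) (Rmult C (INR (max_ss_vertices e s))),
              Rle (INR (max_ss_arcs e snd)) (Rmult C (INR (max_ss_arcs e s))),
              Rle (avg_ss_vertices e snd) (Rmult C (avg_ss_vertices e s)) &
              Rle (avg_ss_arcs e snd) (Rmult C (avg_ss_arcs e s))].
Proof.
move=> ha _ hc hc'.
pose a := Rdiv (nd_const alpha c) c'.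
have a0 : Rle R0 a by apply: Rlt_le; apply: Rdiv_lt_0_compat => //; apply: nd_const_pos.
have [n0 large] := large_n ha hc'.
exists (Rmult 12 (Rmult (a + 1) (a + 1))), n0.
move=> K scl ssep n e sg Ke conn hn sep_large snd s nd vo.
have [npos sep2] := large n hn.
have n0' : 0 < n by apply/ltP; apply: INR_lt; rewrite /=; lra.
have [Q [M [Qbig Msep MV MA]]] := search_space_lower sg conn vo n0'.
have Mbig := sep_large M Msep.
apply: (compare_orders vo n0' Qbig a0 _ _ MV MA); first lra.
(* Nested dissection search spaces have at most [a * (c' n^alpha) <= a |M|] vertices. *)
move=> v; apply: Rle_trans (nd_search_space_small ha hc scl ssep sg Ke nd v) _.
have -> : Rmult (nd_const alpha c) (rpow (INR n) alpha) = Rmult a (Rmult c' (rpow (INR n) alpha)).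
  by rewrite /a; field; lra.
by apply: Rmult_le_compat_l.
Qed.
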